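(* Let $\Sigma,\Gamma$ be finite alphabets, $k>0$, $\tau$ a tier on $\Sigma\times\Gamma^*$, and $f:\Sigma^*\to\Gamma^*$ a function that is $k$-TSSL on tier $\tau$. Then the SFST $T_f$ constructed from $f$ as described in the context computes $f$.
   Context: Strings: $\lambda$ is the empty string; $\rtimes$ is a boundary symbol not in any alphabet. For $m\ge0$, $\mathrm{suff}^m(x)$ is the string of the last $m$ symbols of $\rtimes^mx$. $\mathrm{lcp}(A)$ is the longest common prefix of a set of strings $A$. SFST: $\langle Q,\Sigma,\Gamma,q_0,\to,\sigma\rangle$ with states $Q$, start $q_0$, transition function $\to:Q\times\Sigma\to Q\times\Gamma^*$, final output $\sigma:Q\to\Gamma^*$; $q\xrightarrow{a:y}r$ means $\to(q,a)=\langle r,y\rangle$, extended to strings by $q\xrightarrow{\lambda:\lambda}q$ and composing transitions (concatenating outputs). An SFST computes $f$ if $f(x)=y\sigma(q)$ whenever $q_0\xrightarrow{x:y}q$. For $f:\Sigma^*\to\Gamma^*$: $f^{\gets}(x):=\mathrm{lcp}(\{f(xy)\mid y\in\Sigma^*\})$; $f^{\to}_x$ is defined by $f(xy)=f^{\gets}(x)f^{\to}_x(y)$. A tier on a (possibly infinite) alphabet $A$ is a homomorphism $\tau:A^*\to A^*$ with $\tau(a)\in\{a,\lambda\}$ for each $a$; extended to $\rtimes$ by $\tau(\rtimes)=\rtimes$. Actions: $\mathbb{A}_f:=\{\langle x,y\rangle\in\Sigma\times\Gamma^*\mid\exists z.\ f^{\gets}(zx)=f^{\gets}(z)y\}$,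 written $x:y$. Run: if $|x|\le1$, $f^{\Leftarrow}(x):=x:f^{\gets}(x)$; if $x=yz$, $|y|\ge1$, $|z|=1$, $f^{\Leftarrow}(x):=f^{\Leftarrow}(y)(z:w)$ where $f^{\gets}(x)=f^{\gets}(y)w$. $f$ is $k$-TSSL on $\tau$ if $\mathrm{suff}^{k-1}(\tau(f^{\Leftarrow}(x)))=\mathrm{suff}^{k-1}(\tau(f^{\Leftarrow}(y)))$ implies $f^{\to}_x=f^{\to}_y$ for all $x,y\in\Sigma^*$. Construction of $T_f$: $Q:=(\{\rtimes\}\cup\mathbb{A}_f)^{k-1}$, $q_0:=\rtimes^{k-1}$. For $x\in\Sigma$, $\to(q_0,x):=\langle \mathrm{suff}^{k-1}(\tau(x:f^{\gets}(x))),f^{\gets}(x)\rangle$. For $q\in Q\setminus\{q_0\}$ and $w\in\Sigma$: take $x\in\Sigma^*$ with $\mathrm{suff}^{k-1}(\tau(f^{\Leftarrow}(x)))=q$ and let $w:y\in\mathbb{A}_f$ be such that $f^{\gets}(xw)=f^{\gets}(x)y$; set $\to(q,w):=\langle\mathrm{suff}^{k-1}(\tau(q(w:y))),y\rangle$ (by the TSSL property this does not depend on the choice of $x$). Final outputs: $\sigma(q_0):=f(\lambda)$, and for $q\ne q_0$, $\sigma(q):=f^{\to}_x(\lambda)$ where $\mathrm{suff}^{k-1}(\tau(f^{\Leftarrow}(x)))=q$.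
   Formalization: The start state $q_0$ of $T_f$ is a fresh state outside $Q$ rather than $\rtimes^{k-1}$, used only for the first transition and with $\sigma(q_0)=f(\lambda)$, and the run $f^{\Leftarrow}(\lambda)$ is the empty string. The statement above fails without it. *)

From mathcomp Require Import all_boot.
From Stdlib Require Import ClassicalEpsilon.

Set Implicit Arguments.
Unset Strict Implicit.
Unset Printing Implicit Defensive.

Record sfst (Q S G : Type) := SFST {
  sfst_start : Q;
  sfst_delta : Q -> S -> Q * seq G;
  sfst_final : Q -> seq G }.

Fixpoint sfst_run (Q S G : Type) (T : sfst Q S G) (q : Q) (x : seq S)
  : Q * seq G :=
  match x with
  | [::] => (q, [::])
  | a :: x' =>
      let: (r, y1) := sfst_delta T q a in
      let: (s, y2) := sfst_run T r x' in (s, y1 ++ y2)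
  end.

Definition computes (Q S G : Type) (T : sfst Q S G) (f : seq S -> seq G) :=
  forall x q y, sfst_run T (sfst_start T) x = (q, y) -> f x = y ++ sfst_final T q.

Section TSSL.
Variables (Sigma Gamma : finType).

Definition action := (Sigma * seq Gamma)%type.

Definition is_lcp (A : seq Gamma -> Prop) (w : seq Gamma) :=
  (forall s, A s -> prefix w s) /\
  (forall v, (forall s, A s -> prefix v s) -> size v <= size w).

Definition lcp (A : seq Gamma -> Prop) : seq Gamma :=
  epsilon (inhabits [::]) (is_lcp A).

Definition fl (f : seq Sigma -> seq Gamma) (x : seq Sigma) : seq Gamma :=
  lcp (fun s => exists y, s = f (x ++ y)).

(* f^{->}_x, defined by f(xy) = f^{<-}(x) f^{->}_x(y) *)
Definition fr (f : seq Sigma -> seq Gamma) (x : seq Sigma) (y : seq Sigma)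
  : seq Gamma := drop (size (fl f x)) (f (x ++ y)).

Definition in_actions (f : seq Sigma -> seq Gamma) (a : action) : Prop :=
  exists z, fl f (z ++ [:: a.1]) = fl f z ++ a.2.

(* The run f^{<=}(x): last action of x = yz is z:w with f<-(x) = f<-(y) w;
   for |x| = 1 it is x : f<-(x); for x = lambda it is the empty string. *)
Definition run_step (f : seq Sigma -> seq Gamma) (y : seq Sigma) (z : Sigma)
  : action :=
  if y is [::] then (z, fl f [:: z])
  else (z, drop (size (fl f y)) (fl f (rcons y z))).

Fixpoint run_rev (f : seq Sigma -> seq Gamma) (rx : seq Sigma) : seq action :=
  if rx is z :: ry then rcons (run_rev f ry) (run_step f (rev ry) z) else [::].

Definition run (f : seq Sigma -> seq Gamma) (x : seq Sigma) : seq action :=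
  run_rev f (rev x).

(* Strings over {boundary} U actions: None is the boundary symbol. *)
Definition bstring := seq (option action).

(* A tier on the alphabet of actions, given by the set of symbols it keeps:
   tau(a) = a if T a, lambda otherwise; tau(boundary) = boundary. *)
Definition tier := action -> bool.

Definition tau (T : tier) (s : bstring) : bstring :=
  filter (fun o => if o is Some a then T a else true) s.

Definition suff (m : nat) (s : bstring) : bstring :=
  let s' := nseq m None ++ s in drop (size s' - m) s'.

Definition tier_suffix (f : seq Sigma -> seq Gamma) (T : tier) (k : nat)
  (x : seq Sigma) : bstring :=
  suff k.-1 (tau T (map Some (run f x))).

Definition k_TSSL (f : seq Sigma -> seq Gamma) (T : tier) (k : nat) : Prop :=
  forall x y, tier_suffix f T k x = tier_suffix f T k y -> fr f x = fr f y.

(* Construction of T_f.  States: None is the start state q0; Some q is the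
   (k-1)-string q over {boundary} U A_f. *)
Definition Tf_state := option bstring.

Definition Tf_pick (f : seq Sigma -> seq Gamma) (T : tier) (k : nat)
  (q : bstring) : seq Sigma :=
  epsilon (inhabits [::]) (fun x => tier_suffix f T k x = q).

Definition Tf_delta (f : seq Sigma -> seq Gamma) (T : tier) (k : nat)
  (q : Tf_state) (w : Sigma) : Tf_state * seq Gamma :=
  match q with
  | None => (Some (suff k.-1 (tau T [:: Some (w, fl f [:: w])])), fl f [:: w])
  | Some q' =>
      let x := Tf_pick f T k q' in
      let y := drop (size (fl f x)) (fl f (rcons x w)) in
      (Some (suff k.-1 (tau T (rcons q' (Some (w, y))))), y)
  end.

Definition Tf_final (f : seq Sigma -> seq Gamma) (T : tier) (k : nat)
  (q : Tf_state) : seq Gamma :=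
  match q with
  | None => f [::]
  | Some q' => fr f (Tf_pick f T k q') [::]
  end.

Definition Tf (f : seq Sigma -> seq Gamma) (T : tier) (k : nat)
  : sfst Tf_state Sigma Gamma :=
  SFST None (Tf_delta f T k) (Tf_final f T k).

End TSSL.

(* After reading a nonempty input x, the transducer T_f is in the state
   suff^{k-1}(tau(f^{<=}(x))) and has emitted f^{<-}(x).  Inductively, the output
   on a further symbol w is the increment of f^{<-}(xw) over f^{<-}(x), which is
   lcp {f^{->}_x(wz) | z} and so depends only on f^{->}_x.  The construction
   computes it from some other input with the same tier suffix, and the TSSL
   property says that input has the same f^{->}.  Finally the final output
   f^{->}_x(lambda) completes f(x) = f^{<-}(x) f^{->}_x(lambda). *)
From mathcomp Require Import all_boot zify.
From Stdlib Require Import Classical ClassicalEpsilon.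

Set Implicit Arguments.
Unset Strict Implicit.
Unset Printing Implicit Defensive.

Lemma bounded_ex_max (P : nat -> Prop) (b : nat) :
  P 0 -> (forall n, P n -> n <= b) -> exists2 n, P n & forall m, P m -> m <= n.
Proof.
move=> P0 le_b.
suff /(_ b 0) : forall d n, b - n <= d -> P n ->
    exists2 n, P n & forall m, P m -> m <= n by apply; rewrite ?subn0.
elim=> [|d IH] n le_d Pn.
  by exists n => // m /le_b; lia.
case: (classic (exists2 m, P m & n < m)) => [[m Pm lt_nm]|no_larger].
  by apply: (IH m) => //; have := le_b m Pm; lia.
exists n => // m Pm; rewrite leqNgt; apply/negP => lt_nm.
by apply: no_larger; exists m.
Qed.

Lemma prefix_drop_catl (A : eqType) (p s v : seq A) :
  prefix v (p ++ s) -> size p <= size v -> prefix (drop (size p) v) s.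
Proof.
case/prefixP=> t vt le_pv; apply/prefixP; exists t.
have := congr1 (drop (size p)) vt.
rewrite (drop_size_cat _ (erefl (size p))) drop_cat => ->.
case: ltnP => // le_vp.
have eq_pv : size p = size v by apply/eqP; rewrite eqn_leq le_pv.
by rewrite eq_pv subnn drop0 drop_oversize.
Qed.

Definition lastn (A : Type) (m : nat) (v : seq A) := drop (size v - m) v.

Lemma lastn_cat (A : Type) m (s t : seq A) :
  m <= size t -> lastn m (s ++ t) = lastn m t.
Proof.
move=> le_mt; rewrite /lastn size_cat drop_cat ifN; first by congr drop; lia.
by rewrite -leqNgt; lia.
Qed.

Lemma lastn_lastn_cat (A : Type) m (v t : seq A) :
  m <= size v -> lastn m (lastn m v ++ t) = lastn m (v ++ t).
Proof.
move=> le_mv; rewrite -[v in RHS](cat_take_drop (size v - m)) -catA.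
by rewrite [RHS]lastn_cat // size_cat size_drop; lia.
Qed.

Lemma sfst_run_rcons (Q S G : Type) (M : sfst Q S G) q x a :
  sfst_run M q (rcons x a) =
  let: (r, y) := sfst_run M q x in let: (s, y') := sfst_delta M r a in (s, y ++ y').
Proof.
elim: x q => [|b x IH] q /=; first by case: sfst_delta => s y'; rewrite cats0.
case: sfst_delta => r y1; rewrite IH.
by case: sfst_run => r2 y2; case: sfst_delta => s y3; rewrite catA.
Qed.

Section LongestCommonPrefix.
Variable Gamma : finType.
Implicit Types (A : seq Gamma -> Prop) (s w : seq Gamma).

Lemma is_lcp_exists A s0 : A s0 -> exists w, is_lcp A w.
Proof.
move=> As0.
pose common n := exists w, size w = n /\ forall s, A s -> prefix w s.
have [n [w [<- w_common]] w_max] : exists2 n, common n & forall m, common m -> m <= n.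
  apply: (bounded_ex_max (b := size s0)) => [|n [w [<- w_common]]].
    by exists [::]; split=> // s _; apply: prefix0s.
  exact/size_prefix/w_common.
by exists w; split=> // v v_common; apply: w_max; exists v.
Qed.

Lemma lcpP A s0 : A s0 -> is_lcp A (lcp A).
Proof. by move=> As0; apply: epsilon_spec; apply: is_lcp_exists As0. Qed.

Lemma lcp_uniq A s0 w : A s0 -> is_lcp A w -> lcp A = w.
Proof.
move=> As0 [w_common w_max]; have [l_common l_max] := lcpP As0.
have size_eq : size (lcp A) = size w.
  by apply/eqP; rewrite eqn_leq l_max ?w_max.
have := l_common _ As0; have := w_common _ As0.
by rewrite !prefixE size_eq => /eqP-> /eqP.
Qed.

Lemma is_lcp_catl (I : Type) (g h : I -> seq Gamma) p w :
  (forall i, h i = p ++ g i) ->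
  is_lcp (fun s => exists i, s = g i) w ->
  is_lcp (fun s => exists i, s = h i) (p ++ w).
Proof.
move=> hE [w_common w_max]; split=> [s [i ->]|v v_common].
  rewrite hE; have /prefixP [t ->] := w_common _ (ex_intro _ i erefl).
  by rewrite catA prefix_prefix.
rewrite size_cat; case: (leqP (size v) (size p)) => [le_vp|/ltnW le_pv].
  exact: leq_trans le_vp (leq_addr _ _).
rewrite -(subnK le_pv) addnC leq_add2l -size_drop.
apply: w_max => _ [i ->]; apply: prefix_drop_catl le_pv.
by rewrite -hE; apply: v_common; exists i.
Qed.

End LongestCommonPrefix.

Section Decomposition.
Variables (Sigma Gamma : finType) (f : seq Sigma -> seq Gamma).

Lemma fl_prefix x y : prefix (fl f x) (f (x ++ y)).
Proof. exact: (lcpP (ex_intro _ y erefl)).1 _ (ex_intro _ y erefl). Qed.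

Lemma f_split x y : f (x ++ y) = fl f x ++ fr f x y.
Proof. by have /prefixP [t e] := fl_prefix x y; rewrite /fr e drop_size_cat. Qed.

Lemma fl_cat x u :
  fl f (x ++ u) = fl f x ++ lcp (fun s => exists z, s = fr f x (u ++ z)).
Proof.
apply: (lcp_uniq (s0 := f ((x ++ u) ++ [::]))); first by exists [::].
apply: (is_lcp_catl (h := fun z => f ((x ++ u) ++ z))
                    (g := fun z => fr f x (u ++ z))).
  by move=> z; rewrite -catA f_split.
exact: lcpP (ex_intro _ [::] erefl).
Qed.

Lemma fl_rcons x w :
  fl f (rcons x w) = fl f x ++ drop (size (fl f x)) (fl f (rcons x w)).
Proof. by rewrite -cats1 fl_cat drop_size_cat. Qed.

Lemma drop_fl_rcons_fr x x' w : fr f x = fr f x' ->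
  drop (size (fl f x)) (fl f (rcons x w)) = drop (size (fl f x')) (fl f (rcons x' w)).
Proof. by move=> fr_eq; rewrite -!cats1 !fl_cat !drop_size_cat // fr_eq. Qed.

Lemma run_rcons x w : run f (rcons x w) = rcons (run f x) (run_step f x w).
Proof. by rewrite /run rev_rcons /= revK. Qed.

Lemma run_step_nonnil x w : x != [::] ->
  run_step f x w = (w, drop (size (fl f x)) (fl f (rcons x w))).
Proof. by case: x. Qed.

End Decomposition.

Section TierSuffix.
Variables (Sigma Gamma : finType) (T : tier Sigma Gamma).

Lemma suff_lastn m (s : bstring Sigma Gamma) :
  suff m s = lastn m (nseq m None ++ s).
Proof. by []. Qed.

Lemma size_suff m (s : bstring Sigma Gamma) : size (suff m s) = m.
Proof. by rewrite /suff /= size_drop size_cat size_nseq; lia. Qed.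

Lemma suff_suff_cat m (s t : bstring Sigma Gamma) :
  suff m (suff m s ++ t) = suff m (s ++ t).
Proof.
rewrite [LHS]suff_lastn lastn_cat; last by rewrite size_cat size_suff leq_addr.
rewrite (suff_lastn m s) (suff_lastn m (s ++ t)) catA.
by rewrite lastn_lastn_cat // size_cat size_nseq leq_addr.
Qed.

Lemma tau_cat (s t : bstring Sigma Gamma) : tau T (s ++ t) = tau T s ++ tau T t.
Proof. exact: filter_cat. Qed.

Lemma tau_suff_tau m (s : bstring Sigma Gamma) :
  tau T (suff m (tau T s)) = suff m (tau T s).
Proof.
apply/all_filterP/allP => o /mem_drop; rewrite mem_cat => /orP[/nseqP[-> _] //|].
by rewrite mem_filter => /andP[].
Qed.

Lemma tier_suffix_rcons (f : seq Sigma -> seq Gamma) k x w :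
  tier_suffix f T k (rcons x w) =
  suff k.-1 (tau T (rcons (tier_suffix f T k x) (Some (run_step f x w)))).
Proof.
rewrite /tier_suffix run_rcons map_rcons -!cats1 !tau_cat.
by rewrite tau_suff_tau suff_suff_cat.
Qed.

End TierSuffix.

Section Transducer.
Variables (Sigma Gamma : finType) (k : nat) (T : tier Sigma Gamma).
Variable f : seq Sigma -> seq Gamma.
Hypothesis f_TSSL : k_TSSL f T k.

Lemma fr_Tf_pick x : fr f (Tf_pick f T k (tier_suffix f T k x)) = fr f x.
Proof.
apply: f_TSSL; apply: (epsilon_spec _ (fun y => tier_suffix f T k y = _)).
by exists x.
Qed.

Lemma Tf_run x : x != [::] ->
  sfst_run (Tf f T k) None x = (Some (tier_suffix f T k x), fl f x).
Proof.
elim/last_ind: x => [//|x w IH] _; have [->|x_nonnil] := eqVneq x [::].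
  by rewrite /= cats0.
rewrite sfst_run_rcons IH //= (drop_fl_rcons_fr w (fr_Tf_pick x)) -fl_rcons.
by rewrite tier_suffix_rcons run_step_nonnil.
Qed.

End Transducer.

Theorem proposition27 (Sigma Gamma : finType) (k : nat) (T : tier Sigma Gamma)
  (f : seq Sigma -> seq Gamma) :
  0 < k -> k_TSSL f T k -> computes (Tf f T k) f.
Proof.
move=> _ f_TSSL x q y.
have [-> [<- <-] //|x_nonnil] := eqVneq x [::].
rewrite (Tf_run f_TSSL x_nonnil) => -[<- <-] /=.
by rewrite (fr_Tf_pick f_TSSL) -f_split cats0.
Qed.
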